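(* In a two-intervention factorial stepped-wedge trial (as defined in the context), assuming the matrix $\sum_i\mathbf X_i'\Sigma^{-1}\mathbf X_i-\mathbf S\bar{\mathbf X}$ is invertible, the $2\times 2(T-1)$ matrix $$\mathbf H=\Big[\sum_{i}\mathbf X_i'\Sigma^{-1}\mathbf X_i-\mathbf S\bar{\mathbf X}\Big]^{-1}\Big[\sum_{i}\mathbf X_i'\Sigma^{-1}\mathbf Z_i-\mathbf S\bar{\mathbf Z}\Big]$$ (for which $\mathrm E(\hat\theta)=\mathbf H\delta$ whenever $\mathrm E(\bar{\mathbf y}_i)=\beta+\mathbf Z_i\delta$) has the block form $$\mathbf H=\begin{pmatrix}\mathbf h_1'&\mathbf h_2'\\ \mathbf h_2'&\mathbf h_1'\end{pmatrix}$$ for some row vectors $\mathbf h_1',\mathbf h_2'$ of length $T-1$. Hence $\mathrm E(\hat\theta_1)=\mathbf h_1'\delta_1+\mathbf h_2'\delta_2$ and $\mathrm E(\hat\theta_2)=\mathbf h_2'\delta_1+\mathbf h_1'\delta_2$.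
   Context: A two-intervention ($m=2$) stepped-wedge trial with $T$ periods, $I$ clusters, common cluster-period size $n$. $x_{kij}\in\{0,1\}$ indicates intervention $k$ in cluster $i$ at period $j$, with $x_{ki1}=0$ and $x_{kij}$ nondecreasing in $j$; each cluster starts under control and may add one intervention and later the other. The design is factorial in the sense that the clusters are partitioned into pairs $(i,i')$ whose allocations are mirror images: $x_{1ij}=x_{2i'j}$ and $x_{2ij}=x_{1i'j}$ for all $j$. Exposure time $e_{kij}=\sum_{j'\le j}x_{kij'}$. $\mathbf X_i$ is $T\times2$ with $(j,k)$ entry $x_{kij}$; $\mathbf Z_{k,i}$ is $T\times(T-1)$ with $(j,e)$ entry $1$ iff $e_{kij}=e$; $\mathbf Z_i=(\mathbf Z_{1,i},\mathbf Z_{2,i})$; $\bar{\mathbf Z}=\frac1I\sum_i\mathbf Z_i$, $\bar{\mathbf X}=\frac1I\sum_i\mathbf X_i$, $\mathbf S=\sum_i\mathbf X_i'\Sigma^{-1}$, $\Sigma=\sigma_\alpha^2\mathbf 1\mathbf 1'+(\sigma_\epsilon^2/n)\mathbf I_T$ the covariance of the cluster-period mean vector $\bar{\mathbf y}_i$. $\delta=(\delta_1',\delta_2')'$, $\delta_k\in\mathbb R^{T-1}$ exposure-time-specific effects. $\hat\theta=(\hat\theta_1,\hat\theta_2)'$ is the GLS estimator (known $\Sigma$) of $\theta$ in the working constant-effect model $\bar{\mathbf y}_i=\beta+\mathbf X_i\theta+\mathbf 1\alpha_i+\bar\epsilon_i$ with unrestricted $\beta\in\mathbb R^T$. *)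

From HB Require Import structures.
From mathcomp Require Import all_boot all_order all_algebra.
Set Implicit Arguments. Unset Strict Implicit. Unset Printing Implicit Defensive.
Import Order.TTheory GRing.Theory Num.Theory.
Local Open Scope ring_scope.

(* Design: x k i j  (k : intervention 'I_2, i : cluster 'I_I, j : period 'I_T;
   period with val 0 is the first period). *)
Section SW.
Variables (R : realFieldType) (T I : nat) (x : 'I_2 -> 'I_I -> 'I_T -> bool).

Definition expo (k : 'I_2) (i : 'I_I) (j : 'I_T) : nat :=
  \sum_(j' < T | (j' <= j)%N) (x k i j' : nat).

Definition Xmat (i : 'I_I) : 'M[R]_(T, 2) := \matrix_(j, k) (x k i j)%:R.

(* Z_{k,i} : T x (T-1), (j,e) entry 1 iff e_{kij} = e, with exposure times
   e = 1..T-1 indexed by the ordinal e' : 'I_(T-1) with e = e'+1 *)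
Definition Zk (k : 'I_2) (i : 'I_I) : 'M[R]_(T, T - 1) :=
  \matrix_(j, e) (expo k i j == e.+1)%:R.

Definition Zmat (i : 'I_I) : 'M[R]_(T, (T - 1) + (T - 1)) :=
  row_mx (Zk 0 i) (Zk 1 i).

Definition Xbar : 'M[R]_(T, 2) := (I%:R)^-1 *: \sum_i Xmat i.
Definition Zbar : 'M[R]_(T, (T - 1) + (T - 1)) := (I%:R)^-1 *: \sum_i Zmat i.

Definition Sigma (sa2 se2 : R) (n : nat) : 'M[R]_T :=
  sa2 *: const_mx 1 + (se2 / n%:R) *: 1%:M.

Definition Smat (Sig : 'M[R]_T) : 'M[R]_(2, T) :=
  \sum_i (Xmat i)^T *m invmx Sig.

Definition Amat (Sig : 'M[R]_T) : 'M[R]_2 :=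
  \sum_i (Xmat i)^T *m invmx Sig *m Xmat i - Smat Sig *m Xbar.

Definition Bmat (Sig : 'M[R]_T) : 'M[R]_(2, (T - 1) + (T - 1)) :=
  \sum_i (Xmat i)^T *m invmx Sig *m Zmat i - Smat Sig *m Zbar.

Definition Hmat (Sig : 'M[R]_T) : 'M[R]_(2, (T - 1) + (T - 1)) :=
  invmx (Amat Sig) *m Bmat Sig.
End SW.

(* Validity of a stepped-wedge allocation: everyone starts under control,
   treatment indicators are nondecreasing, and the two interventions are
   not added in the same period ("adds one intervention and later the other"). *)
Definition stepped_wedge (T I : nat) (x : 'I_2 -> 'I_I -> 'I_T -> bool) : Prop :=
  [/\ (forall k i j, val j = 0%N -> x k i j = false),
      (forall k i (j j' : 'I_T), (j <= j')%N -> x k i j -> x k i j')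
    & (forall i (j j' : 'I_T), val j' = j.+1 ->
        ~ (~~ x 0 i j && x 0 i j' && ~~ x 1 i j && x 1 i j'))].

Definition factorial_pairing (T I : nat) (x : 'I_2 -> 'I_I -> 'I_T -> bool)
  (p : 'I_I -> 'I_I) : Prop :=
  [/\ (forall i, p (p i) = i), (forall i, p i != i)
    & (forall i j, x 0 i j = x 1 (p i) j /\ x 1 i j = x 0 (p i) j)].

From HB Require Import structures.
From mathcomp Require Import all_boot all_order all_algebra.
Set Implicit Arguments. Unset Strict Implicit. Unset Printing Implicit Defensive.
Import Order.TTheory GRing.Theory Num.Theory.
Local Open Scope ring_scope.

(* Symmetry: mirroring a cluster swaps the two columns of X_i and the two
   (T-1)-blocks of Z_i, i.e. X_{p i} = X_i P and Z_{p i} = Z_i Q for the block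
   swaps P and Q.  Since p permutes the clusters, every sum over clusters in
   H is invariant under this relabelling, whence P H Q = H; and a matrix fixed
   by swapping its block rows and its block columns has the stated pattern. *)

Section SwapMatrix.
Variable R : pzRingType.

Definition swap_mx n : 'M[R]_(n + n) := block_mx 0 1%:M 1%:M 0.

Lemma tr_swap_mx n : (swap_mx n)^T = swap_mx n.
Proof. by rewrite /swap_mx tr_block_mx !trmx0 !trmx1. Qed.

Lemma mul_row_swap m n (A B : 'M[R]_(m, n)) :
  row_mx A B *m swap_mx n = row_mx B A.
Proof. by rewrite mul_row_block !mulmx0 !mulmx1 addr0 add0r. Qed.

Lemma mul_swap_col m n (A B : 'M[R]_(m, n)) :
  swap_mx m *m col_mx A B = col_mx B A.
Proof. by rewrite mul_block_col !mul0mx !mul1mx addr0 add0r. Qed.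

Lemma swap_mxK n : swap_mx n *m swap_mx n = 1%:M.
Proof.
by rewrite {2}/swap_mx block_mxEv mul_swap_col -block_mxEv -scalar_mx_block.
Qed.

Lemma swap_conj_block m n (Aul : 'M[R]_(m, n)) Aur Adl Adr :
  swap_mx m *m block_mx Aul Aur Adl Adr *m swap_mx n
  = block_mx Adr Adl Aur Aul.
Proof.
by rewrite block_mxEv mul_swap_col mul_col_mx !mul_row_swap -block_mxEv.
Qed.

Lemma swap_invariant_blockE m n (H : 'M[R]_(m + m, n + n)) :
  swap_mx m *m H *m swap_mx n = H ->
  H = col_mx (row_mx (ulsubmx H) (ursubmx H)) (row_mx (ursubmx H) (ulsubmx H)).
Proof.
move=> H_swap.
have := swap_conj_block (ulsubmx H) (ursubmx H) (dlsubmx H) (drsubmx H).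
rewrite submxK H_swap -{1}(submxK H) => /eq_block_mx[Eul Eur _ _].
by rewrite -{1}(submxK H) -Eul -Eur block_mxEv.
Qed.

End SwapMatrix.

Arguments swap_mx {R} n.

Lemma conj_involution_invmx (R : comUnitRingType) n (P A : 'M[R]_n) :
  P *m P = 1%:M -> P *m A *m P = A -> A \in unitmx ->
  P *m invmx A *m P = invmx A.
Proof.
move=> PP PAP uA.
have rinv : A *m (P *m invmx A *m P) = 1%:M.
  by rewrite -{1}PAP !mulmxA -(mulmxA _ P P) PP mulmx1 -(mulmxA P A) mulmxV
             ?mulmx1.
by rewrite -[RHS]mulmx1 -rinv [RHS]mulmxA mulVmx // mul1mx.
Qed.

Section MirrorPairing.
Variables (R : realFieldType) (T I : nat) (x : 'I_2 -> 'I_I -> 'I_T -> bool).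
Variable p : 'I_I -> 'I_I.
Hypothesis pK : involutive p.
Hypothesis x_pair : forall i j, x 0 i j = x 1 (p i) j /\ x 1 i j = x 0 (p i) j.

Lemma x_pair0 i j : x 0 (p i) j = x 1 i j.
Proof. by have [-> _] := x_pair (p i) j; rewrite pK. Qed.

Lemma x_pair1 i j : x 1 (p i) j = x 0 i j.
Proof. by have [_ ->] := x_pair (p i) j; rewrite pK. Qed.

Lemma expo_pair0 i j : expo x 0 (p i) j = expo x 1 i j.
Proof. by apply: eq_bigr => j' _; rewrite x_pair0. Qed.

Lemma expo_pair1 i j : expo x 1 (p i) j = expo x 0 i j.
Proof. by apply: eq_bigr => j' _; rewrite x_pair1. Qed.

Lemma Xmat_pair i : Xmat R x (p i) = Xmat R x i *m swap_mx 1.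
Proof.
rewrite -[Xmat R x i](@hsubmxK _ _ 1 1) (@mul_row_swap _ _ 1).
rewrite -[LHS](@hsubmxK _ _ 1 1).
have lshift0 (k : 'I_1) : lshift 1 k = 0 :> 'I_2.
  by apply: val_inj; rewrite /= (ord1 k).
have rshift1 (k : 'I_1) : rshift 1 k = 1 :> 'I_2.
  by apply: val_inj; rewrite /= (ord1 k).
by apply: f_equal2; apply/matrixP => j k;
   rewrite !mxE lshift0 rshift1 ?x_pair0 ?x_pair1.
Qed.

Lemma Zmat_pair i : Zmat R x (p i) = Zmat R x i *m swap_mx (T - 1).
Proof.
by rewrite /Zmat mul_row_swap; congr row_mx; apply/matrixP => j e;
   rewrite !mxE ?expo_pair0 ?expo_pair1.
Qed.

Lemma sum_pair_conj m1 m2 n1 n2 (L : 'M[R]_(m1, m2)) (Q : 'M[R]_(n1, n2))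
    (F : 'I_I -> 'M[R]_(m2, n1)) (G : 'I_I -> 'M[R]_(m1, n2)) :
  (forall i, G (p i) = L *m F i *m Q) -> L *m (\sum_i F i) *m Q = \sum_i G i.
Proof.
move=> GF; rewrite mulmx_sumr mulmx_suml [RHS](reindex_inj (can_inj pK)).
by apply: eq_bigr => i _; rewrite GF.
Qed.

Variable Sig : 'M[R]_T.

Lemma swap_conj_cross m (Y : 'I_I -> 'M[R]_(T, m + m)) :
    (forall i, Y (p i) = Y i *m swap_mx m) ->
  let C := \sum_i (Xmat R x i)^T *m invmx Sig *m Y i
           - Smat x Sig *m ((I%:R)^-1 *: \sum_i Y i) in
  swap_mx 1 *m C *m swap_mx m = C.
Proof.
move=> Y_pair C; rewrite /C mulmxBr mulmxBl; congr (_ - _).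
  apply: (@sum_pair_conj 2 2) => i.
  by rewrite Xmat_pair Y_pair trmx_mul (@tr_swap_mx _ 1) !mulmxA.
have S_swap : swap_mx 1 *m Smat x Sig *m 1%:M = Smat x Sig.
  apply: (@sum_pair_conj 2 2) => i.
  by rewrite Xmat_pair trmx_mul (@tr_swap_mx _ 1) mulmx1 mulmxA.
have Ybar_swap : 1%:M *m (\sum_i Y i) *m swap_mx m = \sum_i Y i.
  by apply: (@sum_pair_conj T T) => i; rewrite Y_pair mul1mx.
by rewrite mulmx1 in S_swap; rewrite mul1mx in Ybar_swap;
   rewrite mulmxA -mulmxA S_swap -scalemxAl Ybar_swap.
Qed.

Lemma Amat_swap : swap_mx 1 *m Amat x Sig *m swap_mx 1 = Amat x Sig.
Proof. exact: (@swap_conj_cross 1 (Xmat R x) Xmat_pair). Qed.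

Lemma Bmat_swap : swap_mx 1 *m Bmat x Sig *m swap_mx (T - 1) = Bmat x Sig.
Proof. exact: (swap_conj_cross Zmat_pair). Qed.

Lemma Hmat_swap : Amat x Sig \in unitmx ->
  swap_mx 1 *m Hmat x Sig *m swap_mx (T - 1) = Hmat x Sig.
Proof.
move=> uA; have PP := swap_mxK R 1.
rewrite /Hmat -[in RHS](conj_involution_invmx PP Amat_swap uA).
rewrite -[in RHS]Bmat_swap.
by rewrite !mulmxA -(mulmxA _ (swap_mx 1) (swap_mx 1)) PP mulmx1.
Qed.

End MirrorPairing.

Theorem proposition2 (R : realFieldType) (T I : nat)
  (x : 'I_2 -> 'I_I -> 'I_T -> bool) (p : 'I_I -> 'I_I)
  (sa2 se2 : R) (n : nat) :
  stepped_wedge x -> factorial_pairing x p ->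
  0 <= sa2 -> 0 < se2 -> (0 < n)%N ->
  Amat x (@Sigma R T sa2 se2 n) \in unitmx ->
  exists h1 h2 : 'rV[R]_(T - 1),
    Hmat x (@Sigma R T sa2 se2 n) = col_mx (row_mx h1 h2) (row_mx h2 h1) /\
    (forall d1 d2 : 'cV[R]_(T - 1),
      Hmat x (@Sigma R T sa2 se2 n) *m col_mx d1 d2
      = col_mx (h1 *m d1 + h2 *m d2) (h2 *m d1 + h1 *m d2)).
Proof.
move=> _ [pK _ x_pair] _ _ _ uA.
have EH := swap_invariant_blockE (Hmat_swap pK x_pair uA).
set H : 'M[R]_(1 + 1, (T - 1) + (T - 1)) := Hmat x _ in EH *.
exists (ulsubmx H), (ursubmx H); split => // d1 d2.
by rewrite {1}EH (@mul_col_mx _ 1 1) !mul_row_col.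
Qed.
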